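(* Let $\mathcal{I}$ be finite, $\beta$ a positive integer, and for $\mathbf{Q}\in B(\mathcal{L})$ let $$p^{\beta}(\mathbf{Q})=\log\left(\sum_{S\in\mathcal{P}_{\mathbf{Q}}}\min\{\beta,|S|\}\right).$$ Then $p^\beta$ is an arbitrage-free instance-independent pricing function.
   Context: $\mathcal{I}$ is a set of database instances; queries are deterministic functions on $\mathcal{I}$; a query bundle is a finite tuple of queries from a language $\mathcal{L}$, evaluated componentwise; $B(\mathcal{L})$ is the set of bundles, closed under concatenation $\mathbf{Q}_1,\mathbf{Q}_2$. $\mathcal{P}_{\mathbf{Q}}$ is the partition of $\mathcal{I}$ into the equivalence classes of $D\sim D'\iff\mathbf{Q}(D)=\mathbf{Q}(D')$. An instance-independent pricing function $p$ is arbitrage-free if (i) whenever for all $D',D''\in\mathcal{I}$, $\mathbf{Q}_2(D')=\mathbf{Q}_2(D'')$ implies $\mathbf{Q}_1(D')=\mathbf{Q}_1(D'')$, we have $p(\mathbf{Q}_2)\ge p(\mathbf{Q}_1)$; and (ii) $p(\mathbf{Q}_1,\mathbf{Q}_2)\le p(\mathbf{Q}_1)+p(\mathbf{Q}_2)$ for all bundles. *)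

From HB Require Import structures.
From mathcomp Require Import all_boot all_order all_algebra.
From mathcomp Require Import boolp reals exp.
From Stdlib Require List.
Set Implicit Arguments. Unset Strict Implicit. Unset Printing Implicit Defensive.
Import Order.TTheory GRing.Theory Num.Theory.
Local Open Scope ring_scope.

(* Instances: a finite type I.  A query is a deterministic function I -> Out.
   A query language L is a predicate on queries.  A bundle is a finite
   sequence of queries, evaluated componentwise. *)

Definition eval_bundle (I : Type) (Out : Type) (Q : seq (I -> Out)) (D : I)
  : seq Out := map (fun q => q D) Q.

Definition in_bundles (I Out : Type) (L : (I -> Out) -> Prop)
  (Q : seq (I -> Out)) : Prop := forall q, List.In q Q -> L q.

Definition partition_of (I : finType) (Out : Type) (Q : seq (I -> Out))
  : {set {set I}} :=
  [set [set D' | `[< eval_bundle Q D' = eval_bundle Q D >] ] | D in I].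

Definition p_beta (R : realType) (I : finType) (Out : Type) (beta : nat)
  (Q : seq (I -> Out)) : R :=
  ln ((\sum_(S in partition_of Q) minn beta #|S|)%N)%:R.

Definition arbitrage_free (R : realType) (I Out : Type)
  (L : (I -> Out) -> Prop) (p : seq (I -> Out) -> R) : Prop :=
  (forall Q1 Q2, in_bundles L Q1 -> in_bundles L Q2 ->
     (forall D' D'', eval_bundle Q2 D' = eval_bundle Q2 D'' ->
                     eval_bundle Q1 D' = eval_bundle Q1 D'') ->
     p Q1 <= p Q2)
  /\
  (forall Q1 Q2, in_bundles L Q1 -> in_bundles L Q2 ->
     p (Q1 ++ Q2) <= p Q1 + p Q2).

(** The
    capped size is subadditive, so merging blocks can only decrease the sum:
    a bundle that determines another one induces a finer partition and costs
    at least as much.  The partition induced by [Q1 ++ Q2] is the common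
    refinement of those of [Q1] and [Q2], whose blocks [A :&: B] are indexed
    injectively by pairs of blocks; since [0 < beta], the capped size of a
    nonempty [A :&: B] is at most the product of the capped sizes of [A] and
    [B], so the sum is submultiplicative and its logarithm subadditive. *)
From HB Require Import structures.
From mathcomp Require Import all_boot all_order all_algebra.
From mathcomp Require Import boolp reals exp.
From mathcomp Require Import zify.
Set Implicit Arguments. Unset Strict Implicit. Unset Printing Implicit Defensive.
Import Order.TTheory GRing.Theory Num.Theory.

Lemma leq_sum_subset (J : finType) (A B : {pred J}) (G : J -> nat) :
  {subset A <= B} -> \sum_(j in A) G j <= \sum_(j in B) G j.
Proof. by move=> AB; apply: (sub_le_big leqnn (fun m n => leq_addr n m)) => j /AB. Qed.

Lemma minn_cardU (T : finType) (beta : nat) (A B : {set T}) :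
  minn beta #|A :|: B| <= minn beta #|A| + minn beta #|B|.
Proof. by have [] := leq_card_setU A B; lia. Qed.

Lemma minn_cardI (T : finType) (beta : nat) (A B : {set T}) : 0 < beta ->
  A :&: B != set0 -> minn beta #|A :&: B| <= minn beta #|A| * minn beta #|B|.
Proof.
move=> beta_gt0 /set0Pn[x xAB].
have B_gt0 : 0 < #|B| by apply/card_gt0P; exists x; move: xAB; rewrite inE => /andP[].
have := subset_leq_card (subsetIl A B); nia.
Qed.

Section SubadditiveSetFunction.

Variables (T : finType) (g : {set T} -> nat).
Hypothesis g_set0 : g set0 = 0.
Hypothesis g_subadd : forall A B, g (A :|: B) <= g A + g B.

Lemma subadd_bigcup (J : finType) (P : pred J) (F : J -> {set T}) :
  g (\bigcup_(j | P j) F j) <= \sum_(j | P j) g (F j).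
Proof.
elim/big_ind2: _ => [|m U n V leUm leVn|//]; first by rewrite g_set0.
exact: leq_trans (g_subadd U V) (leq_add leUm leVn).
Qed.

End SubadditiveSetFunction.

Section Fibers.

Variable I : finType.

Definition fiber (T : Type) (k : I -> T) (x : I) : {set I} :=
  [set y | `[< k y = k x >]].

Definition fibers (T : Type) (k : I -> T) : {set {set I}} :=
  [set fiber k x | x in I].

Definition saturate (T : Type) (k : I -> T) (S : {set I}) : {set I} :=
  \bigcup_(y in S) fiber k y.

Lemma fiberP (T : Type) (k : I -> T) x y : reflect (k y = k x) (y \in fiber k x).
Proof. by rewrite inE; apply: asboolP. Qed.

Lemma mem_fiber (T : Type) (k : I -> T) x : x \in fiber k x.
Proof. exact/fiberP. Qed.

Lemma fiber_eq (T : Type) (k : I -> T) x y : k x = k y -> fiber k x = fiber k y.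
Proof. by rewrite /fiber => ->. Qed.

Lemma subset_saturate (T : Type) (k : I -> T) (S : {set I}) : S \subset saturate k S.
Proof. by apply/subsetP => y yS; apply/bigcupP; exists y; rewrite ?mem_fiber. Qed.

Section Refinement.

Variables (T1 T2 : Type) (k1 : I -> T1) (k2 : I -> T2).
Hypothesis k2_refines_k1 : forall x y, k2 x = k2 y -> k1 x = k1 y.

Lemma saturate_fiber x : saturate k1 (fiber k2 x) = fiber k1 x.
Proof.
apply/setP => z; apply/bigcupP/idP => [[y /fiberP/k2_refines_k1 e1 /fiberP e2]|zx].
  by apply/fiberP; rewrite e2.
by exists x; rewrite ?mem_fiber.
Qed.

Lemma saturate_fibers : saturate k1 @: fibers k2 = fibers k1.
Proof. by rewrite -imset_comp; apply: eq_imset => x; apply: saturate_fiber. Qed.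

Variable g : {set I} -> nat.
Hypothesis g_set0 : g set0 = 0.
Hypothesis g_subadd : forall A B, g (A :|: B) <= g A + g B.

Lemma sum_fibers_refine :
  \sum_(S in fibers k1) g S <= \sum_(S in fibers k2) g S.
Proof.
rewrite [X in _ <= X](partition_big_imset (saturate k1)) saturate_fibers.
apply: leq_sum => _ /imsetP[x _ ->].
have cover : fiber k1 x = \bigcup_(S in fibers k2 | saturate k1 S == fiber k1 x) S.
  apply/setP => z; apply/idP/bigcupP => [/fiberP zx | [S /andP[_ /eqP <-] zS]].
    exists (fiber k2 z); rewrite ?mem_fiber // imset_f //= saturate_fiber.
    by rewrite (fiber_eq zx).
  exact: subsetP (subset_saturate k1 S) z zS.
by rewrite {1}cover subadd_bigcup.
Qed.

End Refinement.

Section CommonRefinement.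

Variables (T T1 T2 : Type) (k : I -> T) (k1 : I -> T1) (k2 : I -> T2).
Hypothesis k_joint : forall x y, k x = k y <-> k1 x = k1 y /\ k2 x = k2 y.

Lemma fiber_joint x : fiber k x = fiber k1 x :&: fiber k2 x.
Proof.
apply/setP => y; rewrite in_setI.
apply/fiberP/andP => [/k_joint[e1 e2] | [/fiberP e1 /fiberP e2]].
  by split; apply/fiberP.
exact/k_joint.
Qed.

Variable g : {set I} -> nat.
Hypothesis g_meet : forall A B, A :&: B != set0 -> g (A :&: B) <= g A * g B.

Lemma sum_fibers_joint :
  \sum_(S in fibers k) g S <= (\sum_(A in fibers k1) g A) * (\sum_(B in fibers k2) g B).
Proof.
have refines1 x y : k x = k y -> k1 x = k1 y by move/k_joint=> [].
have refines2 x y : k x = k y -> k2 x = k2 y by move/k_joint=> [].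
pose blocks S := (saturate k1 S, saturate k2 S).
have blocks_fiber x : blocks (fiber k x) = (fiber k1 x, fiber k2 x).
  by rewrite /blocks !saturate_fiber.
have blocks_inj : {in fibers k &, injective blocks}.
  move=> _ _ /imsetP[x _ ->] /imsetP[y _ ->].
  by rewrite !blocks_fiber !fiber_joint => -[-> ->].
rewrite big_distrlr pair_big /=.
apply: (@leq_trans (\sum_(S in fibers k) g (blocks S).1 * g (blocks S).2)).
  apply: leq_sum => _ /imsetP[x _ ->]; rewrite blocks_fiber fiber_joint /=.
  by apply: g_meet; apply/set0Pn; exists x; rewrite inE !mem_fiber.
rewrite -(big_imset (fun p => g p.1 * g p.2) blocks_inj).
apply: leq_sum_subset => _ /imsetP[_ /imsetP[x _ ->] ->].
by rewrite blocks_fiber unfold_in /= !imset_f.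
Qed.

End CommonRefinement.

End Fibers.

Lemma eval_bundle_cat (I Out : Type) (Q1 Q2 : seq (I -> Out)) D :
  eval_bundle (Q1 ++ Q2) D = eval_bundle Q1 D ++ eval_bundle Q2 D.
Proof. exact: map_cat. Qed.

Lemma eq_eval_bundle_cat (I Out : Type) (Q1 Q2 : seq (I -> Out)) D D' :
  eval_bundle (Q1 ++ Q2) D = eval_bundle (Q1 ++ Q2) D' <->
  eval_bundle Q1 D = eval_bundle Q1 D' /\ eval_bundle Q2 D = eval_bundle Q2 D'.
Proof.
rewrite !eval_bundle_cat; split=> [e | [-> ->] //].
have size_eq : size (eval_bundle Q1 D) = size (eval_bundle Q1 D') by rewrite !size_map.
split.
  by rewrite -[LHS](take_size_cat (eval_bundle Q2 D) size_eq) e take_size_cat.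
by rewrite -[LHS](drop_size_cat (eval_bundle Q2 D) size_eq) e drop_size_cat.
Qed.

Local Open Scope ring_scope.

Lemma ln_nat_ge0 (R : realType) (n : nat) : 0 <= ln (n%:R : R).
Proof. by case: n => [|n]; [rewrite ln0 | apply: ln_ge0; rewrite ler1n]. Qed.

Lemma ler_ln_nat (R : realType) (m n : nat) : (m <= n)%N -> ln (m%:R : R) <= ln n%:R.
Proof.
case: m => [|m] le_mn; first by rewrite ln0 // ln_nat_ge0.
by rewrite ler_ln ?posrE ?ltr0n ?ler_nat // (leq_trans _ le_mn).
Qed.

(* Because [ln 0 = 0], this also holds when a factor vanishes. *)
Lemma ln_natM_le (R : realType) (m n : nat) :
  ln ((m * n)%N%:R : R) <= ln m%:R + ln n%:R.
Proof.
case: m => [|m]; first by rewrite mul0n ln0 // add0r ln_nat_ge0.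
case: n => [|n]; first by rewrite muln0 ln0 // addr0 ln_nat_ge0.
by rewrite natrM lnM ?posrE ?ltr0n.
Qed.

Theorem lemma22 (R : realType) (I : finType) (Out : Type)
  (L : (I -> Out) -> Prop) (beta : nat) (hbeta : (0 < beta)%N) :
  arbitrage_free L (@p_beta R I Out beta).
Proof.
have p_fibers Q : @p_beta R I Out beta Q =
    ln (\sum_(S in fibers (eval_bundle Q)) minn beta #|S|)%N%:R by [].
split=> [Q1 Q2 _ _ determines | Q1 Q2 _ _]; rewrite !p_fibers.
  apply/ler_ln_nat/(sum_fibers_refine determines) => [|A B].
    by rewrite cards0 minn0.
  exact: minn_cardU.
apply/(le_trans _ (ln_natM_le _ _ _))/ler_ln_nat/sum_fibers_joint => [x y | A B].
  exact: eq_eval_bundle_cat.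
exact: minn_cardI.
Qed.
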